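(* Assume (A1)–(A3) and $m_1<0$. Then $V_1=\sum_{i\ge0}\pi_1(i)\mathbb E_{(i,0)}(Y_1(1))$ is well defined, and for every $(k,\ell)\in\mathbb N\times\mathbb Z$ the random variable $Y_1(T_1(k))$ is $\mathbb P_{(k,\ell)}$-integrable with \[\mathbb E_{(k,\ell)}\bigl(Y_1(T_1(k))\bigr)=\ell+\frac{V_1}{\pi_1(k)},\] where $T_1(k)=\inf\{n>0: X_1(n)=k\}$.
   Context: Let $\mathbb N=\{0,1,2,\dots\}$ and fix an integer $k_0\ge1$. Let $\mu$, $\mu'_j$ ($0\le j<k_0$), $\mu''_i$ ($0\le i<k_0$), $\mu_{ij}$ ($0\le i,j<k_0$) be probability measures on $\mathbb Z^2$. The random walk $Z=(X(n),Y(n))$ on $\mathbb N^2$ has transition probabilities $p((i,j)\to(i',j'))$ equal to $\mu(i'-i,j'-j)$ if $i,j\ge k_0$; $\mu'_j(i'-i,j'-j)$ if $i\ge k_0$, $0\le j<k_0$; $\mu''_i(i'-i,j'-j)$ if $0\le i<k_0$, $j\ge k_0$; $\mu_{ij}(i'-i,j'-j)$ if $0\le i,j<k_0$. Assumptions: (A1) $\mu(a,b)=0$ if $a<-k_0$ or $b<-k_0$; $\mu'_j(a,b)=0$ if $a<-k_0$ or $b<-j$; $\mu''_i(a,b)=0$ if $b<-k_0$ or $a<-i$; $\mu_{ij}(a,b)=0$ if $a<-i$ or $b<-j$. (A2) There are $\delta,\gamma,C>0$ with $\sup_{(i,j)\in\mathbb N^2}\mathbb E_{(i,j)}[\exp(\delta(X(1)-i)+\gamma(Y(1)-j))]\le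 C$. (A3) $Z_0,Z_1,Z_2,Z$ are irreducible on their state spaces. $Z_0$: random walk on $\mathbb Z^2$ with increment law $\mu$; $m_1=\sum a\mu(a,b)$. $Z_1=(X_1,Y_1)$: Markov chain on $\mathbb N\times\mathbb Z$ with transitions $\mu(i'-i,j'-j)$ from $(i,j)$ if $i\ge k_0$ and $\mu''_i(i'-i,j'-j)$ if $0\le i<k_0$; $\mathbb P_{(k,\ell)},\mathbb E_{(k,\ell)}$ refer to it started at $(k,\ell)$. $Z_2$: Markov chain on $\mathbb Z\times\mathbb N$ with transitions $\mu$ if $j\ge k_0$ and $\mu'_j$ if $0\le j<k_0$. The first coordinate $X_1$ is a Markov chain on $\mathbb N$; when $m_1<0$ it is positive recurrent with invariant distribution $\pi_1$. *)

(* Discrete Markov chains are encoded through their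
   one-step laws; path probabilities are computed with [esum] (sums of
   nonnegative extended reals over arbitrary index sets). *)
From HB Require Import structures.
From mathcomp Require Import all_boot all_order all_algebra.
From mathcomp Require Import all_classical all_reals all_analysis.

Set Implicit Arguments.
Unset Strict Implicit.
Unset Printing Implicit Defensive.

Import Order.TTheory GRing.Theory Num.Theory.
Local Open Scope classical_set_scope.
Local Open Scope ring_scope.

Section Defs.
Variable R : realType.

Definition is_distr (T : choiceType) (m : T -> R) : Prop :=
  (forall x, 0 <= m x) /\ (\esum_(x in [set: T]) (m x)%:E = 1)%E.

Definition dsum (T : choiceType) (f : T -> R) : \bar R :=
  (\esum_(x in [set: T]) (Num.max (f x) 0)%:E -
   \esum_(x in [set: T]) (Num.max (- f x) 0)%:E)%E.

(* Absolute moment (integrability is: this is < +oo). *)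
Definition dabs (T : choiceType) (f : T -> R) : \bar R :=
  (\esum_(x in [set: T]) `|f x|%:E)%E.

Definition irreducible (S : eqType) (P : S -> S -> R) : Prop :=
  forall x y : S, exists s : seq S,
    path (fun a b => 0 < P a b) x s /\ last x s = y.

Variables (k0 : nat)
  (mu : int * int -> R)
  (mu' : nat -> int * int -> R)
  (mu'' : nat -> int * int -> R)
  (muij : nat -> nat -> int * int -> R).

(* increment law of Z at (i,j) in N^2 *)
Definition lawZ (i j : nat) : int * int -> R :=
  if (k0 <= i)%N then (if (k0 <= j)%N then mu else mu' j)
  else (if (k0 <= j)%N then mu'' i else muij i j).

(* increment law of Z_1 at (i, j) in N x Z : depends only on i *)
Definition law1 (i : nat) : int * int -> R :=
  if (k0 <= i)%N then mu else mu'' i.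

(* increment law of Z_2 at (i, j) in Z x N : depends only on j *)
Definition law2 (j : nat) : int * int -> R :=
  if (k0 <= j)%N then mu else mu' j.

Definition kernel0 (x y : int * int) : R := mu (y.1 - x.1, y.2 - x.2).
Definition kernel1 (x y : nat * int) : R :=
  law1 x.1 (y.1%:Z - x.1%:Z, y.2 - x.2).
Definition kernel2 (x y : int * nat) : R :=
  law2 x.2 (y.1 - x.1, y.2%:Z - x.2%:Z).
Definition kernelZ (x y : nat * nat) : R :=
  lawZ x.1 x.2 (y.1%:Z - x.1%:Z, y.2%:Z - x.2%:Z).

(* transition kernel of the first coordinate X_1 of Z_1 *)
Definition kernelX1 (i i' : nat) : \bar R :=
  (\esum_(b in [set: int]) (law1 i (i'%:Z - i%:Z, b))%:E)%E.

Definition invariant_X1 (pi1 : nat -> R) : Prop :=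
  is_distr pi1 /\
  forall i' : nat,
    ((pi1 i')%:E = \esum_(i in [set: nat]) (pi1 i)%:E * kernelX1 i i')%E.

Definition m1 : \bar R := dsum (fun ab : int * int => ab.1%:~R * mu ab).

(* E_{(i,0)}(Y_1(1)) and E_{(i,0)}|Y_1(1)| *)
Definition EY1 (i : nat) : \bar R := dsum (fun ab : int * int => ab.2%:~R * law1 i ab).
Definition EabsY1 (i : nat) : \bar R := dabs (fun ab : int * int => ab.2%:~R * law1 i ab).

Definition V1 (pi1 : nat -> R) : R := fine (dsum (fun i : nat => pi1 i * fine (EY1 i))).

(* Taboo probabilities for Z_1 started at z0, for the return time T_1(k):
   taboo k z0 n x = P_{z0}( X_1(m) <> k for 0 < m < n, Z_1(n) = x ). *)
Fixpoint taboo (k : nat) (z0 : nat * int) (n : nat) : nat * int -> \bar R :=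
  match n with
  | 0 => fun x => if x == z0 then 1%E else 0%E
  | m.+1 => fun x =>
      (\esum_(y in [set y : nat * int | m = 0%N \/ y.1 <> k])
          taboo k z0 m y * (kernel1 y x)%:E)%E
  end.

(* the event {T_1(k) = n, Z_1(n) = x}, n > 0 *)
Definition hit_set (k : nat) : set (nat * (nat * int)) :=
  [set nx | (0 < nx.1)%N /\ nx.2.1 = k].

Definition P_T1_finite (k : nat) (l : int) : \bar R :=
  (\esum_(nx in hit_set k) taboo k (k, l) nx.1 nx.2)%E.

(* E_{(k,l)} |Y_1(T_1(k))|  (on {T_1(k) < oo}) *)
Definition EabsY_T1 (k : nat) (l : int) : \bar R :=
  (\esum_(nx in hit_set k) taboo k (k, l) nx.1 nx.2 * `|nx.2.2%:~R : R|%:E)%E.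

Definition EY_T1 (k : nat) (l : int) : \bar R :=
  (\esum_(nx in hit_set k) taboo k (k, l) nx.1 nx.2 * (Num.max (nx.2.2%:~R : R) 0)%:E -
   \esum_(nx in hit_set k) taboo k (k, l) nx.1 nx.2 * (Num.max (- (nx.2.2%:~R : R)) 0)%:E)%E.

End Defs.

(* Let T be the first positive time at which X_1 is back at level k, and, for Z_1 started
   at (k, l), let G(x) be the expected number of visits to x at times 0 <= n < T and H the law
   of Z_1(T).  Cutting paths at their last step before T gives dirac_(k,l) + G K = G + H.
   Summing G over the second coordinate gives the occupation measure nu of X_1 during one
   excursion from k; it is dominated by the invariant measure pi_1 / pi_1(k), so
   E T = sum G <= 1 / pi_1(k) < oo, H has mass one, nu is invariant, and irreducibility
   forces nu = pi_1 / pi_1(k).  Testing the decomposition against h >= 0 (through the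
   truncations min(h, M)) gives Dynkin's formula
     sum H h = h(k, l) + sum_y G(y) E_y[h(Z_1(1)) - h(y)],
   where the drift terms are finite as soon as the increments of h are dominated by those of
   Y_1, whose absolute moments are uniformly bounded by (A1)-(A2).  For h = Y_1^+ and Y_1^-
   this yields E Y_1(T) = l + sum_i nu(i) E_(i,0) Y_1(1) = l + V_1 / pi_1(k). *)

From HB Require Import structures.
From mathcomp Require Import all_boot all_order all_algebra.
From mathcomp Require Import all_classical all_reals all_analysis.
From mathcomp Require Import zify lra ring.

Set Implicit Arguments.
Unset Strict Implicit.
Unset Printing Implicit Defensive.

Import Order.TTheory GRing.Theory Num.Theory.
Local Open Scope classical_set_scope.
Local Open Scope ring_scope.

Section esum_facts.
Context {R : realType}.
Local Open Scope ereal_scope.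

Lemma fin_addeI (a x y : \bar R) : a \is a fin_num -> a + x = a + y -> x = y.
Proof. by move=> a_fin /(congr1 (fun t => t - a)); rewrite ![a + _]addeC !addeK. Qed.

Lemma eq_esumD (T : choiceType) (I : set T) (a b c d : T -> \bar R) :
  (forall i, 0 <= a i) -> (forall i, 0 <= b i) ->
  (forall i, 0 <= c i) -> (forall i, 0 <= d i) ->
  (forall i, I i -> a i + b i = c i + d i) ->
  \esum_(i in I) a i + \esum_(i in I) b i = \esum_(i in I) c i + \esum_(i in I) d i.
Proof. by move=> *; rewrite -!esumD//; exact: eq_esum. Qed.

Lemma esum_ge_term (T : choiceType) (I : set T) (a : T -> \bar R) j :
  (forall i, I i -> 0 <= a i) -> I j -> a j <= \esum_(i in I) a i.
Proof.
move=> a_ge0 Ij; apply: esum_ge; exists [set j]; last by rewrite fsbig_set1.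
by split; [exact: finite_set1 | move=> x ->].
Qed.

Lemma ge0_esumZl_EFin (T : choiceType) (I : set T) (r : R) (a : T -> \bar R) :
  (0 <= r)%R -> (forall i, 0 <= a i) ->
  \esum_(i in I) (r%:E * a i) = r%:E * \esum_(i in I) a i.
Proof.
move=> r_ge0 a_ge0; rewrite /esum -ereal_supZl//; last first.
  by apply/set0P; exists 0; exists set0; [exact: fsets_set0 | rewrite fsbig_set0].
congr ereal_sup; apply/seteqP; split => x /=.
  move=> [A [finA AI] <-]; exists (\sum_(x \in A) a x); first by exists A.
  by rewrite ge0_mule_fsumr.
by move=> [_ [A [finA AI] <-] <-]; exists A => //; rewrite ge0_mule_fsumr.
Qed.

Lemma ge0_esumZl (T : choiceType) (I : set T) (c : \bar R) (a : T -> \bar R) :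
  0 <= c -> (forall i, 0 <= a i) ->
  \esum_(i in I) (c * a i) = c * \esum_(i in I) a i.
Proof.
move=> c_ge0 a_ge0; case: c c_ge0 => [r | _ | //].
  by rewrite lee_fin => r_ge0; exact: ge0_esumZl_EFin.
have [a_eq0 | ] := pselect (forall i, I i -> a i = 0).
  by rewrite (esum1 a_eq0) mule0; apply: esum1 => i Ii; rewrite a_eq0 ?mule0.
move=> /existsNP[j /not_implyP[Ij /eqP aj_neq0]].
have aj_gt0 : 0 < a j by rewrite lt_def aj_neq0 a_ge0.
have : +oo * a j <= \esum_(i in I) (+oo * a i).
  by apply: (esum_ge_term (a := fun i => +oo * a i)) => // i _; exact: mule_ge0.
rewrite gt0_mulye// leye_eq => /eqP ->.
by rewrite gt0_mulye//; apply: lt_le_trans aj_gt0 _; exact: esum_ge_term.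
Qed.

Lemma ge0_esumZr (T : choiceType) (I : set T) (c : \bar R) (a : T -> \bar R) :
  0 <= c -> (forall i, 0 <= a i) ->
  \esum_(i in I) (a i * c) = (\esum_(i in I) a i) * c.
Proof.
by move=> c_ge0 a_ge0; rewrite muleC -ge0_esumZl//; apply: eq_esum => i _; exact: muleC.
Qed.

Lemma esum_pair (T1 T2 : choiceType) (a : T1 * T2 -> \bar R) :
  (forall z, 0 <= a z) ->
  \esum_(z in [set: T1 * T2]) a z =
  \esum_(i in [set: T1]) \esum_(j in [set: T2]) a (i, j).
Proof.
move=> a_ge0; rewrite (@esum_esum _ _ _ setT (fun _ => setT) (fun i j => a (i, j)))//.
have -> : [set: T1] `*`` (fun=> [set: T2]) = [set: T1 * T2].
  by apply/seteqP; split => // -[].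
by apply: eq_esum => -[].
Qed.

Lemma esum_swap (T1 T2 : choiceType) (a : T1 -> T2 -> \bar R) :
  (forall i j, 0 <= a i j) ->
  \esum_(i in [set: T1]) \esum_(j in [set: T2]) a i j =
  \esum_(j in [set: T2]) \esum_(i in [set: T1]) a i j.
Proof.
move=> a_ge0; rewrite -(esum_pair (a := fun z => a z.1 z.2))//.
rewrite -(esum_pair (a := fun z => a z.2 z.1))//.
rewrite (reindex_esum [set: T2 * T1] [set: T1 * T2] (fun z => (z.2, z.1)))//.
split=> [// | [? ?] [? ?] _ _ [-> ->] // | [x y] _]; by exists (y, x).
Qed.

Lemma esum_nat_recl (a : nat -> \bar R) :
  (forall n, 0 <= a n) ->
  \esum_(n in [set: nat]) a n = a 0%N + \esum_(n in [set: nat]) a n.+1.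
Proof.
move=> a_ge0; rewrite (esumID [set 0%N])// setTI esum_set1//; congr (_ + _).
rewrite setTI (reindex_esum [set: nat] (~` [set 0%N]) S)//.
by split=> [// | ? ? _ _ [] // | [|n] //= _]; exists n.
Qed.

Lemma esum_dirac (T : choiceType) (t : T) (c : \bar R) : 0 <= c ->
  \esum_(x in [set: T]) (if x == t then c else 0) = c.
Proof.
move=> c_ge0; rewrite (esumID [set t]); last by move=> x _; case: ifP.
by rewrite setTI esum_set1 ?eqxx// esum1 ?adde0// => x [_ /= /eqP /negPf ->].
Qed.

Lemma esum_ereal_sup (T : choiceType) (I : set T) (f : nat -> T -> \bar R) :
  (forall n i, 0 <= f n i) -> (forall i, nondecreasing_seq (f ^~ i)) ->
  \esum_(i in I) ereal_sup (range (f ^~ i)) =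
  ereal_sup (range (fun n => \esum_(i in I) f n i)).
Proof.
move=> f_ge0 f_nd; apply/eqP; rewrite eq_le; apply/andP; split; last first.
  apply: ge_ereal_sup => _ [n _ <-]; apply: le_esum => i Ii.
  by apply: ereal_sup_ubound; exists n.
apply: ge_ereal_sup => _ [X [finX XI] <-].
have cvX : (fun n => \sum_(i \in X) f n i) @ \oo -->
           \sum_(i \in X) ereal_sup (range (f ^~ i)).
  rewrite fsbig_finite//=; under eq_fun do rewrite fsbig_finite//=.
  apply: cvg_nnesum => [j _ | j _]; first exact: nearW.
  exact: ereal_nondecreasing_cvgn.
apply: (cvge_le _ cvX); apply: nearW => n.
apply: (@le_trans _ _ (\esum_(i in I) f n i)); first by apply: esum_ge; exists X.
by apply: ereal_sup_ubound; exists n.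
Qed.

Lemma nondecreasing_cvg_esum (T : choiceType) (I : set T)
    (f : nat -> T -> \bar R) (g : T -> \bar R) :
  (forall n i, 0 <= f n i) -> (forall i, nondecreasing_seq (f ^~ i)) ->
  (forall i, f ^~ i @ \oo --> g i) ->
  (fun n => \esum_(i in I) f n i) @ \oo --> \esum_(i in I) g i.
Proof.
move=> f_ge0 f_nd fg.
have -> : \esum_(i in I) g i = \esum_(i in I) ereal_sup (range (f ^~ i)).
  apply: eq_esum => i _.
  exact: (cvg_unique _ (fg i) (ereal_nondecreasing_cvgn (f_nd i))).
rewrite esum_ereal_sup//; apply: ereal_nondecreasing_cvgn => m n mn.
by apply: le_esum => i _; exact: f_nd.
Qed.

Lemma dsum_sub (T : choiceType) (u v : T -> R) :
  (forall x, 0 <= u x)%R -> (forall x, 0 <= v x)%R ->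
  \esum_(x in [set: T]) (u x)%:E \is a fin_num ->
  \esum_(x in [set: T]) (v x)%:E \is a fin_num ->
  dsum (fun x => u x - v x)%R =
  \esum_(x in [set: T]) (u x)%:E - \esum_(x in [set: T]) (v x)%:E.
Proof.
move=> u_ge0 v_ge0 u_fin v_fin.
have max_ge0 (r : R) : (0 <= Num.max r 0)%R by rewrite le_max lexx orbT.
have sum_fin (f g : T -> R) : (forall x, 0 <= f x <= g x)%R ->
    \esum_(x in [set: T]) (g x)%:E \is a fin_num ->
    \esum_(x in [set: T]) (f x)%:E \is a fin_num.
  move=> fg g_fin; rewrite ge0_fin_numE; last first.
    by apply: esum_ge0 => x _; have /andP[] := fg x; rewrite lee_fin.
  move: g_fin; rewrite ge0_fin_numE => [g_lt|]; last first.
    by apply: esum_ge0 => x _; have /andP[f0 fgx] := fg x; rewrite lee_fin (le_trans f0).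
  apply: le_lt_trans g_lt; apply: le_esum => x _; rewrite lee_fin.
  by have /andP[] := fg x.
have pos_fin := sum_fin (fun x => Num.max (u x - v x) 0)%R u.
have neg_fin := sum_fin (fun x => Num.max (- (u x - v x)) 0)%R v.
rewrite /dsum.
have /pos_fin P_fin : forall x, (0 <= Num.max (u x - v x) 0 <= u x)%R.
  by move=> x; rewrite max_ge0 ge_max u_ge0 gerBl v_ge0.
have /neg_fin N_fin : forall x, (0 <= Num.max (- (u x - v x)) 0 <= v x)%R.
  by move=> x; rewrite max_ge0 ge_max v_ge0 opprB gerBl u_ge0.
have : \esum_(x in [set: T]) (Num.max (u x - v x) 0)%:E + \esum_(x in [set: T]) (v x)%:E =
       \esum_(x in [set: T]) (Num.max (- (u x - v x)) 0)%:E + \esum_(x in [set: T]) (u x)%:E.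
  apply: eq_esumD => [x|x|x|x|x _]; rewrite ?lee_fin ?max_ge0//.
  by rewrite -!EFinD; congr EFin; case: leP => ?; case: leP => ?; lra.
rewrite -(fineK (P_fin u_fin)) -(fineK (N_fin v_fin)) -(fineK u_fin) -(fineK v_fin).
rewrite -EFinB -!EFinD => -[sum_eq].
by congr EFin; lra.
Qed.

End esum_facts.

Ltac case_minmax := repeat match goal with
  | |- context [Num.min ?x ?y] => case: (leP x y) => ?
  | |- context [Num.max ?x ?y] => case: (leP x y) => ?
  end.

Section increments.
Context {R : realType} (T : Type).

Definition incr_pos (h : T -> R) y w := Num.max (h w - h y) 0.
Definition incr_neg (h : T -> R) y w := Num.max (h y - h w) 0.

Lemma incr_pos_ge0 h y w : 0 <= incr_pos h y w.
Proof. by rewrite le_max lexx orbT. Qed.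

Lemma incr_neg_ge0 h y w : 0 <= incr_neg h y w.
Proof. by rewrite le_max lexx orbT. Qed.

Lemma incr_pos_subr_neg h y w : incr_pos h y w - incr_neg h y w = h w - h y.
Proof.
rewrite /incr_pos /incr_neg; case: (leP (h w - h y) 0) => ?; case: leP => ?; lra.
Qed.

Lemma incr_pos_le_abs h y w : incr_pos h y w <= `|h w - h y|.
Proof. by rewrite ge_max normr_ge0 ler_norm. Qed.

Lemma incr_neg_le_abs h y w : incr_neg h y w <= `|h w - h y|.
Proof. by rewrite ge_max normr_ge0 distrC ler_norm. Qed.

Lemma incr_balance (f g h : T -> R) y w : (forall x, f x - g x = h x) ->
  incr_pos f y w + incr_neg g y w + incr_neg h y w =
  incr_neg f y w + incr_pos g y w + incr_pos h y w.
Proof.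
move=> fgh; have := fgh y; have := fgh w.
have := incr_pos_subr_neg f y w; have := incr_pos_subr_neg g y w.
have := incr_pos_subr_neg h y w; lra.
Qed.

End increments.

Section truncation.
Context {R : realType} (T : Type) (h : T -> R).

Definition truncate (M : nat) x := Num.min (h x) M%:R.

Lemma truncate_bnd M x : 0 <= h x -> 0 <= truncate M x <= M%:R.
Proof. by move=> hx; rewrite le_min hx ler0n ge_min lexx orbT. Qed.

Lemma truncate_eventually x : \forall M \near \oo, truncate M x = h x.
Proof.
have [N hN] : exists N : nat, h x <= N%:R.
  exists (Num.bound `|h x|); apply: le_trans (ler_norm (h x)) _.
  by apply: ltW; exact: archi_boundP.
by apply: filterS (nbhs_infty_ge N) => M NM; rewrite /truncate min_l// (le_trans hN)// ler_nat.
Qed.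

Lemma truncate_nondecreasing x : nondecreasing_seq (truncate^~ x).
Proof. by move=> M M' MM'; rewrite le_min ge_min lexx ge_min ler_nat MM' !orbT. Qed.

Lemma incr_pos_truncate_nondecreasing y w :
  nondecreasing_seq (fun M => incr_pos (truncate M) y w).
Proof. by move=> M M'; rewrite -(ler_nat R) /incr_pos /truncate => MM'; case_minmax; lra. Qed.

Lemma incr_neg_truncate_nondecreasing y w :
  nondecreasing_seq (fun M => incr_neg (truncate M) y w).
Proof. by move=> M M'; rewrite -(ler_nat R) /incr_neg /truncate => MM'; case_minmax; lra. Qed.

Lemma incr_pos_truncate_eventually y w :
  \forall M \near \oo, incr_pos (truncate M) y w = incr_pos h y w.
Proof.
apply: filterS2 (truncate_eventually y) (truncate_eventually w) => M ey ew.
by rewrite /incr_pos ey ew.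
Qed.

Lemma incr_neg_truncate_eventually y w :
  \forall M \near \oo, incr_neg (truncate M) y w = incr_neg h y w.
Proof.
apply: filterS2 (truncate_eventually y) (truncate_eventually w) => M ey ew.
by rewrite /incr_neg ey ew.
Qed.

End truncation.

Section return_decomposition.
Context {R : realType} (S : choiceType).
Variables (K : S -> S -> R) (A : set S) (z0 : S).
Hypothesis K_ge0 : forall x y, 0 <= K x y.
Local Open Scope ereal_scope.

Fixpoint taboo_prob n : S -> \bar R :=
  match n with
  | 0 => fun x => if x == z0 then 1 else 0
  | m.+1 => fun x =>
      \esum_(y in [set y | m = 0%N \/ ~ A y]) taboo_prob m y * (K y x)%:E
  end.

Definition before_return n x :=
  if (n == 0%N) || (x \notin A) then taboo_prob n x else 0.
Definition return_at n x :=
  if (0 < n)%N && (x \in A) then taboo_prob n x else 0.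

(* With [T] the first positive time in [A], [green x] is the expected number of visits to
   [x] at times [0 <= n < T] and [return_law] is the law of the state at time [T]. *)
Definition green x := \esum_(n in [set: nat]) before_return n x.
Definition return_law x := \esum_(n in [set: nat]) return_at n x.

Lemma K_ge0E x y : 0 <= (K x y)%:E.
Proof. by rewrite lee_fin. Qed.

Lemma taboo_prob_ge0 n x : 0 <= taboo_prob n x.
Proof.
elim: n x => [|n IH] x /=; first by case: ifP.
by apply: esum_ge0 => y _; rewrite mule_ge0 ?K_ge0E.
Qed.

Lemma before_return_ge0 n x : 0 <= before_return n x.
Proof. by rewrite /before_return; case: ifP => // _; exact: taboo_prob_ge0. Qed.

Lemma return_at_ge0 n x : 0 <= return_at n x.
Proof. by rewrite /return_at; case: ifP => // _; exact: taboo_prob_ge0. Qed.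

Lemma green_ge0 x : 0 <= green x.
Proof. by apply: esum_ge0 => n _; exact: before_return_ge0. Qed.

Lemma return_law_ge0 x : 0 <= return_law x.
Proof. by apply: esum_ge0 => n _; exact: return_at_ge0. Qed.

Lemma taboo_probS n x :
  taboo_prob n.+1 x = \esum_(y in [set: S]) before_return n y * (K y x)%:E.
Proof.
rewrite /= esum_mkcond; apply: eq_esum => y _; rewrite /before_return.
have -> : (y \in [set y | n = 0%N \/ ~ A y]) = (n == 0%N) || (y \notin A).
  apply/idP/orP => [/set_mem[->|nAy] | [/eqP n0 | /negP nAy]].
  - by left.
  - by right; apply/negP => /set_mem.
  - by apply/mem_set; left.
  - by apply/mem_set; right => /mem_set.
by case: ifP => //; rewrite mul0e.
Qed.

Lemma taboo_prob_split n x : taboo_prob n x = before_return n x + return_at n x.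
Proof.
rewrite /before_return /return_at; case: n => [|n] /=; first by rewrite adde0.
by case: (x \in A); rewrite ?adde0 ?add0e.
Qed.

Lemma green_balance x :
  taboo_prob 0 x + \esum_(y in [set: S]) green y * (K y x)%:E = green x + return_law x.
Proof.
have -> : \esum_(y in [set: S]) green y * (K y x)%:E =
          \esum_(n in [set: nat]) taboo_prob n.+1 x.
  transitivity (\esum_(y in [set: S]) \esum_(n in [set: nat])
                  before_return n y * (K y x)%:E).
    by apply: eq_esum => y _; rewrite ge0_esumZr ?K_ge0E// => n; exact: before_return_ge0.
  rewrite esum_swap; last by move=> y n; rewrite mule_ge0 ?before_return_ge0 ?K_ge0E.
  by apply: eq_esum => n _; rewrite taboo_probS.
rewrite /green /return_law -esumD => [|n _|n _]; last 2 first.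
- exact: before_return_ge0.
- exact: return_at_ge0.
under [RHS]eq_esum do rewrite -taboo_prob_split.
by rewrite [RHS]esum_nat_recl// => n; exact: taboo_prob_ge0.
Qed.

Hypothesis K_sum1 : forall x, \esum_(y in [set: S]) (K x y)%:E = 1.

Lemma green_kernel_mass :
  \esum_(x in [set: S]) \esum_(y in [set: S]) green y * (K y x)%:E =
  \esum_(y in [set: S]) green y.
Proof.
rewrite esum_swap; last by move=> x y; rewrite mule_ge0 ?green_ge0 ?K_ge0E.
apply: eq_esum => y _; rewrite ge0_esumZl ?green_ge0 ?K_sum1 ?mule1// => x.
exact: K_ge0E.
Qed.

Lemma return_law_mass : (\esum_(x in [set: S]) green x) \is a fin_num ->
  \esum_(x in [set: S]) return_law x = 1.
Proof.
move=> green_fin; apply: (fin_addeI green_fin).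
rewrite -esumD => [|x _|x _]; last 2 first.
- exact: green_ge0.
- exact: return_law_ge0.
under eq_esum do rewrite -green_balance.
rewrite esumD => [|x _|x _]; last 2 first.
- exact: taboo_prob_ge0.
- by apply: esum_ge0 => y _; rewrite mule_ge0 ?green_ge0 ?K_ge0E.
by rewrite green_kernel_mass esum_dirac// addeC.
Qed.

Definition drift_sum (t : S -> S -> R) :=
  \esum_(yw in [set: S * S]) green yw.1 * ((K yw.1 yw.2)%:E * (t yw.1 yw.2)%:E).

Lemma drift_sumE t : (forall y w, 0 <= t y w)%R ->
  drift_sum t = \esum_(y in [set: S]) green y *
                  (\esum_(w in [set: S]) (K y w)%:E * (t y w)%:E).
Proof.
move=> t_ge0; rewrite /drift_sum esum_pair; last first.
  by move=> yw; rewrite !mule_ge0 ?green_ge0 ?K_ge0E ?lee_fin.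
apply: eq_esum => y _ /=; rewrite ge0_esumZl ?green_ge0// => w.
by rewrite mule_ge0 ?K_ge0E ?lee_fin.
Qed.

Lemma drift_sum_ge0 t : (forall y w, 0 <= t y w)%R -> 0 <= drift_sum t.
Proof.
by move=> t_ge0; apply: esum_ge0 => yw _; rewrite !mule_ge0 ?green_ge0 ?K_ge0E ?lee_fin.
Qed.

Lemma drift_sumD t1 t2 :
  (forall y w, 0 <= t1 y w)%R -> (forall y w, 0 <= t2 y w)%R ->
  drift_sum (fun y w => t1 y w + t2 y w)%R = drift_sum t1 + drift_sum t2.
Proof.
move=> t1_ge0 t2_ge0; rewrite /drift_sum -esumD => [|yw _|yw _]; last 2 first.
- by rewrite !mule_ge0 ?green_ge0 ?K_ge0E ?lee_fin.
- by rewrite !mule_ge0 ?green_ge0 ?K_ge0E ?lee_fin.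
apply: eq_esum => yw _; rewrite EFinD ge0_muleDr ?K_ge0E ?lee_fin//.
by rewrite ge0_muleDr ?green_ge0// mule_ge0 ?K_ge0E ?lee_fin.
Qed.

Lemma kernel_incr_balance (f : S -> R) y : (forall x, 0 <= f x)%R ->
  \esum_(w in [set: S]) (K y w)%:E * (f w)%:E +
  \esum_(w in [set: S]) (K y w)%:E * (incr_neg f y w)%:E =
  (f y)%:E + \esum_(w in [set: S]) (K y w)%:E * (incr_pos f y w)%:E.
Proof.
move=> f_ge0; have -> : (f y)%:E = \esum_(w in [set: S]) (K y w)%:E * (f y)%:E.
  by rewrite ge0_esumZr ?lee_fin// ?K_sum1 ?mul1e// => w; exact: K_ge0E.
have Kt_ge0 (t : S -> R) w : (0 <= t w)%R -> 0 <= (K y w)%:E * (t w)%:E.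
  by move=> t_ge0; rewrite mule_ge0 ?K_ge0E ?lee_fin.
apply: eq_esumD => [w|w|w|w|w _].
- exact: Kt_ge0.
- exact: Kt_ge0 (incr_neg_ge0 f y w).
- exact: Kt_ge0 (fun=> f y) w (f_ge0 y).
- exact: Kt_ge0 (incr_pos_ge0 f y w).
rewrite -!EFinM -!EFinD -!mulrDr; congr (_ * _)%:E.
by have := incr_pos_subr_neg f y w; lra.
Qed.

Lemma green_balance_weighted (f : S -> R) : (forall x, 0 <= f x)%R ->
  (f z0)%:E + \esum_(y in [set: S]) green y *
                (\esum_(w in [set: S]) (K y w)%:E * (f w)%:E) =
  \esum_(x in [set: S]) green x * (f x)%:E +
  \esum_(x in [set: S]) return_law x * (f x)%:E.
Proof.
move=> f_ge0; have fE x : 0 <= (f x)%:E by rewrite lee_fin.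
have -> : (f z0)%:E = \esum_(x in [set: S]) taboo_prob 0 x * (f x)%:E.
  rewrite -(esum_dirac z0 (fE z0)); apply: eq_esum => x _ /=.
  by case: eqP => [->|]; rewrite ?mul1e ?mul0e.
have -> : \esum_(y in [set: S]) green y * (\esum_(w in [set: S]) (K y w)%:E * (f w)%:E) =
          \esum_(x in [set: S]) (\esum_(y in [set: S]) green y * (K y x)%:E) * (f x)%:E.
  transitivity (\esum_(x in [set: S]) \esum_(y in [set: S])
                  green y * (K y x)%:E * (f x)%:E); last first.
    apply: eq_esum => x _; rewrite ge0_esumZr ?fE// => y.
    by rewrite mule_ge0 ?green_ge0 ?K_ge0E.
  rewrite esum_swap; last by move=> x y; rewrite !mule_ge0 ?green_ge0 ?K_ge0E.
  apply: eq_esum => y _; rewrite -ge0_esumZl ?green_ge0// => [|w]; last first.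
    by rewrite mule_ge0 ?K_ge0E.
  by apply: eq_esum => w _; rewrite muleA.
have GK_ge0 x : 0 <= \esum_(y in [set: S]) green y * (K y x)%:E.
  by apply: esum_ge0 => y _; rewrite mule_ge0 ?green_ge0 ?K_ge0E.
apply: eq_esumD => [x|x|x|x|x _].
- exact: mule_ge0 (taboo_prob_ge0 0 x) (fE x).
- exact: mule_ge0 (GK_ge0 x) (fE x).
- exact: mule_ge0 (green_ge0 x) (fE x).
- exact: mule_ge0 (return_law_ge0 x) (fE x).
rewrite -(ge0_muleDl _ (taboo_prob_ge0 0 x) (GK_ge0 x)).
by rewrite -(ge0_muleDl _ (green_ge0 x) (return_law_ge0 x)) green_balance.
Qed.

Lemma drift_sum_cvg (t : nat -> S -> S -> R) (t_lim : S -> S -> R) :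
  (forall M y w, 0 <= t M y w)%R ->
  (forall y w, nondecreasing_seq (fun M => t M y w)) ->
  (forall y w, \forall M \near \oo, t M y w = t_lim y w) ->
  (fun M => drift_sum (t M)) @ \oo --> drift_sum t_lim.
Proof.
move=> t_ge0 t_nd t_ev; apply: nondecreasing_cvg_esum => [M yw | [y w] M M' MM' | [y w]].
- by rewrite !mule_ge0 ?green_ge0 ?K_ge0E ?lee_fin.
- by rewrite !lee_wpmul2l ?green_ge0 ?K_ge0E ?lee_fin ?t_nd.
- by apply: cvg_near_cst; apply: filterS (t_ev y w) => M /= ->.
Qed.

Section dynkin.
Hypothesis green_fin : (\esum_(x in [set: S]) green x) \is a fin_num.

Lemma dynkin_formula_bounded (f : S -> R) (M : R) : (forall x, 0 <= f x <= M)%R ->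
  (f z0)%:E + drift_sum (incr_pos f) =
  \esum_(x in [set: S]) return_law x * (f x)%:E + drift_sum (incr_neg f).
Proof.
(* Boundedness of [f] makes [\esum_x green x * f x] finite, so that it can be cancelled. *)
move=> f_bnd; have f_ge0 x : (0 <= f x)%R by have /andP[] := f_bnd x.
have fE x : 0 <= (f x)%:E by rewrite lee_fin.
have Gf_fin : \esum_(x in [set: S]) green x * (f x)%:E \is a fin_num.
  rewrite ge0_fin_numE; last by apply: esum_ge0 => x _; rewrite mule_ge0 ?green_ge0.
  apply: (@le_lt_trans _ _ ((\esum_(x in [set: S]) green x) * M%:E)); last first.
    by rewrite ltey_eq fin_numM.
  have M_ge0 : (0 <= M)%R by have /andP[f0 fM] := f_bnd z0; exact: le_trans fM.
  rewrite -ge0_esumZr ?lee_fin//; last exact: green_ge0.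
  apply: le_esum => x _; rewrite lee_wpmul2l ?green_ge0// lee_fin.
  by have /andP[] := f_bnd x.
have GK_balance : \esum_(y in [set: S]) green y *
                    (\esum_(w in [set: S]) (K y w)%:E * (f w)%:E) +
                  drift_sum (incr_neg f) =
                  \esum_(x in [set: S]) green x * (f x)%:E + drift_sum (incr_pos f).
  have Kt_ge0 (t : S -> S -> R) y : (forall w, 0 <= t y w)%R ->
      0 <= \esum_(w in [set: S]) (K y w)%:E * (t y w)%:E.
    by move=> t_ge0; apply: esum_ge0 => w _; rewrite mule_ge0 ?K_ge0E ?lee_fin.
  have Kf_ge0 y := Kt_ge0 (fun _ w => f w) y (fun w => f_ge0 w).
  have Kpos_ge0 y := Kt_ge0 (incr_pos f) y (incr_pos_ge0 f y).
  have Kneg_ge0 y := Kt_ge0 (incr_neg f) y (incr_neg_ge0 f y).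
  rewrite !drift_sumE; [|exact: incr_pos_ge0|exact: incr_neg_ge0].
  apply: eq_esumD => [y|y|y|y|y _].
  - exact: mule_ge0 (green_ge0 y) (Kf_ge0 y).
  - exact: mule_ge0 (green_ge0 y) (Kneg_ge0 y).
  - exact: mule_ge0 (green_ge0 y) (fE y).
  - exact: mule_ge0 (green_ge0 y) (Kpos_ge0 y).
  rewrite -(ge0_muleDr _ (Kf_ge0 y) (Kneg_ge0 y)) -(ge0_muleDr _ (fE y) (Kpos_ge0 y)).
  by rewrite kernel_incr_balance.
apply: (fin_addeI Gf_fin).
by rewrite addeCA -GK_balance addeA green_balance_weighted// -addeA.
Qed.

Lemma dynkin_formula (h : S -> R) : (forall x, 0 <= h x)%R ->
  (h z0)%:E + drift_sum (incr_pos h) =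
  \esum_(x in [set: S]) return_law x * (h x)%:E + drift_sum (incr_neg h).
Proof.
move=> h_ge0; have tr_bnd M x := truncate_bnd M (h_ge0 x).
have lhs_cvg :
    (fun M => (truncate h M z0)%:E + drift_sum (incr_pos (truncate h M))) @ \oo -->
    (h z0)%:E + drift_sum (incr_pos h).
  apply: cvgeD.
  - by rewrite ge0_adde_def// inE ?lee_fin ?drift_sum_ge0//; exact: incr_pos_ge0.
  - by apply: cvg_near_cst; apply: filterS (@truncate_eventually _ _ h z0) => M ->.
  apply: drift_sum_cvg => [M y w | y w | y w].
  - exact: incr_pos_ge0.
  - exact: incr_pos_truncate_nondecreasing.
  - exact: incr_pos_truncate_eventually.
have rhs_cvg :
    (fun M => \esum_(x in [set: S]) return_law x * (truncate h M x)%:E +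
              drift_sum (incr_neg (truncate h M))) @ \oo -->
    \esum_(x in [set: S]) return_law x * (h x)%:E + drift_sum (incr_neg h).
  apply: cvgeD.
  - rewrite ge0_adde_def// inE ?drift_sum_ge0//; last exact: incr_neg_ge0.
    by apply: esum_ge0 => x _; rewrite mule_ge0 ?return_law_ge0 ?lee_fin.
  - apply: nondecreasing_cvg_esum => [M x | x M M' MM' | x].
    + by rewrite mule_ge0 ?return_law_ge0 ?lee_fin//; have /andP[] := tr_bnd M x.
    + by rewrite lee_wpmul2l ?return_law_ge0// lee_fin; exact: truncate_nondecreasing.
    + by apply: cvg_near_cst; apply: filterS (@truncate_eventually _ _ h x) => M /= ->.
  apply: drift_sum_cvg => [M y w | y w | y w].
  - exact: incr_neg_ge0.
  - exact: incr_neg_truncate_nondecreasing.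
  - exact: incr_neg_truncate_eventually.
have truncate_dynkin :
    (fun M => (truncate h M z0)%:E + drift_sum (incr_pos (truncate h M))) =
    (fun M => \esum_(x in [set: S]) return_law x * (truncate h M x)%:E +
              drift_sum (incr_neg (truncate h M))).
  by apply: funext => M; exact: (dynkin_formula_bounded (tr_bnd M)).
by rewrite truncate_dynkin in lhs_cvg; exact: (cvg_unique _ lhs_cvg rhs_cvg).
Qed.

End dynkin.

End return_decomposition.

Section level_occupation.
Context {R : realType} (I J : choiceType).
Variables (K : I * J -> I * J -> R) (p : I -> I -> \bar R) (k : I) (l : J).
Hypothesis K_ge0 : forall x y, 0 <= K x y.
Hypothesis K_marg : forall z j, (\esum_(b in [set: J]) (K z (j, b))%:E = p z.1 j)%E.
Local Open Scope ereal_scope.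

Local Notation level := [set x : I * J | x.1 = k].
Local Notation before_return := (before_return K level (k, l)).
Local Notation green := (green K level (k, l)).
Local Notation return_law := (return_law K level (k, l)).
Local Notation taboo_prob := (taboo_prob K level (k, l)).

Lemma marg_ge0 i j : 0 <= p i j.
Proof. by rewrite -(K_marg (i, l)); apply: esum_ge0 => b _; exact: K_ge0E. Qed.

Lemma K_le_marg z w : (K z w)%:E <= p z.1 w.1.
Proof.
rewrite -K_marg; case: w => j b /=.
by apply: (esum_ge_term (a := fun b => (K z (j, b))%:E)) => // ? _; exact: K_ge0E.
Qed.

Definition level_visits n i := \esum_(b in [set: J]) before_return n (i, b).
Definition occupation i := \esum_(n in [set: nat]) level_visits n i.

Lemma level_visits_ge0 n i : 0 <= level_visits n i.
Proof. by apply: esum_ge0 => b _; exact: before_return_ge0. Qed.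

Lemma occupation_ge0 i : 0 <= occupation i.
Proof. by apply: esum_ge0 => n _; exact: level_visits_ge0. Qed.

Lemma in_level x : (x \in level) = (x.1 == k).
Proof. by apply/idP/eqP => [/set_mem | /mem_set]. Qed.

Lemma level_visits0 i : level_visits 0%N i = if i == k then 1 else 0.
Proof.
rewrite /level_visits /before_return /=; case: eqP => [->|/eqP ik].
  by under eq_esum do rewrite xpair_eqE eqxx /=; rewrite esum_dirac.
by rewrite esum1// => b _; rewrite xpair_eqE (negPf ik).
Qed.

Lemma level_visitsS_k n : level_visits n.+1 k = 0.
Proof. by rewrite /level_visits esum1// => b _; rewrite /before_return in_level eqxx. Qed.

Lemma level_visits_marg n j :
  \esum_(i in [set: I]) level_visits n i * p i j =
  \esum_(b in [set: J]) taboo_prob n.+1 (j, b).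
Proof.
transitivity (\esum_(i in [set: I]) \esum_(b in [set: J]) before_return n (i, b) * p i j).
  apply: eq_esum => i _; rewrite ge0_esumZr ?marg_ge0// => b.
  exact: before_return_ge0.
rewrite -(esum_pair (a := fun y => before_return n y * p y.1 j)); last first.
  by move=> y; rewrite mule_ge0 ?before_return_ge0 ?marg_ge0.
transitivity (\esum_(y in [set: I * J]) \esum_(b in [set: J])
                before_return n y * (K y (j, b))%:E).
  apply: eq_esum => y _; rewrite ge0_esumZl ?K_marg ?before_return_ge0// => b.
  exact: K_ge0E.
rewrite esum_swap; last by move=> y b; rewrite mule_ge0 ?before_return_ge0 ?K_ge0E.
by apply: eq_esum => b _; rewrite taboo_probS.
Qed.

Lemma level_visitsS n j : j != k ->
  level_visits n.+1 j = \esum_(i in [set: I]) level_visits n i * p i j.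
Proof.
move=> jk; rewrite level_visits_marg /level_visits; apply: eq_esum => b _.
by rewrite /before_return in_level /= (negPf jk).
Qed.

Lemma occupation_k : occupation k = 1.
Proof.
rewrite /occupation (esum_nat_recl (level_visits_ge0^~ k)).
by rewrite level_visits0 eqxx esum1 ?adde0// => n _; rewrite level_visitsS_k.
Qed.

Lemma occupation_marg j :
  \esum_(i in [set: I]) occupation i * p i j =
  \esum_(b in [set: J]) \esum_(n in [set: nat]) taboo_prob n.+1 (j, b).
Proof.
transitivity (\esum_(i in [set: I]) \esum_(n in [set: nat]) level_visits n i * p i j).
  apply: eq_esum => i _; rewrite ge0_esumZr ?marg_ge0// => n.
  exact: level_visits_ge0.
rewrite esum_swap; last by move=> i n; rewrite mule_ge0 ?level_visits_ge0 ?marg_ge0.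
under eq_esum do rewrite level_visits_marg.
by rewrite esum_swap// => n b; exact: taboo_prob_ge0.
Qed.

Lemma occupation_inv_neq j : j != k ->
  occupation j = \esum_(i in [set: I]) occupation i * p i j.
Proof.
move=> jk; rewrite occupation_marg /occupation (esum_nat_recl (level_visits_ge0^~ j)).
rewrite level_visits0 (negPf jk) add0e [RHS]esum_swap; last by move=> *; exact: taboo_prob_ge0.
apply: eq_esum => n _; apply: eq_esum => b _.
by rewrite /before_return in_level /= jk.
Qed.

Lemma return_law_off_level x : x.1 != k -> return_law x = 0.
Proof.
by move=> xk; rewrite /return_law esum1// => n _; rewrite /return_at in_level (negPf xk) andbF.
Qed.

Lemma occupation_marg_k :
  \esum_(i in [set: I]) occupation i * p i k = \esum_(x in [set: I * J]) return_law x.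
Proof.
rewrite occupation_marg esum_pair; last exact: return_law_ge0.
rewrite (esumID [set k]); last by move=> i _; apply: esum_ge0 => b _; exact: return_law_ge0.
rewrite setTI esum_set1; last by apply: esum_ge0 => b _; exact: return_law_ge0.
rewrite [X in _ = _ + X]esum1 ?adde0; last first.
  by move=> i [_ /= /eqP ik]; rewrite esum1// => b _; exact: return_law_off_level.
apply: eq_esum => b _.
rewrite /return_law (esum_nat_recl (return_at_ge0 level (k, l) K_ge0 ^~ (k, b))).
by rewrite /return_at /= add0e; apply: eq_esum => n _; rewrite in_level eqxx.
Qed.

Lemma green_level_sum (c : I -> \bar R) : (forall i, 0 <= c i) ->
  \esum_(x in [set: I * J]) green x * c x.1 = \esum_(i in [set: I]) occupation i * c i.
Proof.
move=> c_ge0; transitivity (\esum_(i in [set: I]) \esum_(b in [set: J]) green (i, b) * c i).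
  apply: (esum_pair (a := fun x => green x * c x.1)) => x.
  by rewrite mule_ge0 ?green_ge0 ?c_ge0.
apply: eq_esum => i _.
rewrite ge0_esumZr; [|exact: c_ge0|by move=> b; exact: green_ge0].
congr (_ * _); rewrite /occupation /green esum_swap// => n b.
exact: before_return_ge0.
Qed.

Lemma occupation_le (lam : I -> \bar R) :
  (forall i, 0 <= lam i) -> 1 <= lam k ->
  (forall j, j != k -> \esum_(i in [set: I]) lam i * p i j <= lam j) ->
  forall j, occupation j <= lam j.
Proof.
move=> lam_ge0 lam_k lam_super.
have partial N j : \sum_(0 <= n < N) level_visits n j <= lam j.
  elim: N j => [|N IH] j; first by rewrite big_geq// lam_ge0.
  rewrite big_nat_recl// level_visits0; have [->|jk] := eqVneq j k.
    by rewrite big1 ?adde0// => n _; exact: level_visitsS_k.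
  rewrite add0e; under eq_bigr do rewrite level_visitsS//.
  rewrite -esum_sum; last by move=> i n _ _; rewrite mule_ge0 ?level_visits_ge0 ?marg_ge0.
  apply: le_trans (lam_super j jk); apply: le_esum => i _.
  rewrite -ge0_sume_distrl; last by move=> n _; exact: level_visits_ge0.
  by rewrite lee_wpmul2r ?marg_ge0 ?IH.
move=> j; rewrite /occupation -(nneseries_esumT (level_visits_ge0^~ j)).
apply: lime_le; first by apply: is_cvg_nneseries => *; exact: level_visits_ge0.
by apply: nearW => N; exact: partial.
Qed.

Lemma invariant_gt0 (m : I -> \bar R) : irreducible K ->
  (forall i, 0 <= m i) -> (forall j, m j = \esum_(i in [set: I]) m i * p i j) ->
  forall x y : I * J, 0 < m x.1 -> 0 < m y.1.
Proof.
move=> K_irr m_ge0 m_inv x y; have [s [xs <-]] := K_irr x y.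
elim: s x xs => [//|z s IH] x /= /andP[Kxz zs] mx; apply: IH => //.
rewrite m_inv; apply: (@lt_le_trans _ _ (m x.1 * p x.1 z.1)).
  by rewrite mule_gt0// (lt_le_trans _ (K_le_marg x z))// lte_fin.
apply: (esum_ge_term (a := fun i => m i * p i z.1)) => // i _.
by rewrite mule_ge0 ?marg_ge0.
Qed.

Section positive_recurrence.
Variable pi : I -> R.
Hypothesis pi_ge0 : forall i, (0 <= pi i)%R.
Hypothesis pi_sum1 : \esum_(i in [set: I]) (pi i)%:E = 1.
Hypothesis pi_inv : forall j, (pi j)%:E = \esum_(i in [set: I]) (pi i)%:E * p i j.
Hypothesis K_irr : irreducible K.
Hypothesis K_sum1 : forall x, \esum_(y in [set: I * J]) (K x y)%:E = 1.

Lemma invariant_pi_gt0 i : (0 < pi i)%R.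
Proof.
have [j pj_gt0] : exists j, (0 < pi j)%R.
  apply/not_existsP => pi_le0; move: pi_sum1; rewrite esum1 => [/eqP|j _].
    by rewrite eq_sym onee_eq0.
  by apply/eqP; rewrite eqe eq_le pi_ge0 andbT leNgt; exact/negP.
have pi_ge0E i' : 0 <= (pi i')%:E by rewrite lee_fin.
have pj_gt0E : 0 < (pi (j, l).1)%:E by rewrite lte_fin.
have := invariant_gt0 (m := fun i => (pi i)%:E) K_irr pi_ge0E pi_inv (i, l) pj_gt0E.
by rewrite lte_fin.
Qed.

Lemma normalized_pi_inv j :
  (pi j / pi k)%:E = \esum_(i in [set: I]) (pi i / pi k)%:E * p i j.
Proof.
have pik_ge0 : 0 <= ((pi k)^-1)%:E by rewrite lee_fin invr_ge0.
rewrite EFinM pi_inv -ge0_esumZr//; last by move=> i; rewrite mule_ge0 ?lee_fin ?marg_ge0.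
by apply: eq_esum => i _; rewrite EFinM muleAC.
Qed.

Lemma occupation_le_pi j : occupation j <= (pi j / pi k)%:E.
Proof.
apply: (occupation_le (lam := fun i => (pi i / pi k)%:E)) => [i | | i _];
  last by rewrite normalized_pi_inv.
  by rewrite lee_fin divr_ge0.
by rewrite divff// gt_eqF// invariant_pi_gt0.
Qed.

Lemma green_mass_fin : (\esum_(x in [set: I * J]) green x) \is a fin_num.
Proof.
have mass_le : \esum_(x in [set: I * J]) green x <= ((pi k)^-1)%:E.
  have := green_level_sum (fun=> lee01); under eq_esum do rewrite mule1.
  under [X in _ = X -> _]eq_esum do rewrite mule1.
  move=> ->; apply: (@le_trans _ _ (\esum_(i in [set: I]) (pi i / pi k)%:E)).
    by apply: le_esum => i _; exact: occupation_le_pi.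
  under eq_esum do rewrite EFinM.
  by rewrite ge0_esumZr ?pi_sum1 ?mul1e ?lee_fin ?invr_ge0.
rewrite ge0_fin_numE; last by apply: esum_ge0 => x _; exact: green_ge0.
exact: le_lt_trans mass_le (ltry _).
Qed.

Lemma return_law_mass1 : \esum_(x in [set: I * J]) return_law x = 1.
Proof. exact: return_law_mass K_ge0 K_sum1 green_mass_fin. Qed.

Lemma occupation_inv j : occupation j = \esum_(i in [set: I]) occupation i * p i j.
Proof.
have [->|jk] := eqVneq j k; last exact: occupation_inv_neq.
by rewrite occupation_marg_k return_law_mass1 occupation_k.
Qed.

Lemma occupation_eq j : occupation j = (pi j / pi k)%:E.
Proof.
have occ_fin i : occupation i \is a fin_num.
  rewrite ge0_fin_numE ?occupation_ge0//.
  exact: le_lt_trans (occupation_le_pi i) (ltry _).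
(* [m] is a nonnegative invariant measure vanishing at [k], hence zero. *)
pose m i := (pi i / pi k)%:E - occupation i.
have m_ge0 i : 0 <= m i by rewrite sube_ge0 ?occ_fin ?orbT ?occupation_le_pi.
have piE i : (pi i / pi k)%:E = occupation i + m i by rewrite addeC subeK.
have m_inv i : m i = \esum_(i' in [set: I]) m i' * p i' i.
  apply: (fin_addeI (occ_fin i)); rewrite -piE normalized_pi_inv occupation_inv.
  rewrite -esumD => [|i' _|i' _]; last 2 first.
  - by rewrite mule_ge0 ?occupation_ge0 ?marg_ge0.
  - by rewrite mule_ge0 ?m_ge0 ?marg_ge0.
  by apply: eq_esum => i' _; rewrite piE ge0_muleDl ?occupation_ge0 ?m_ge0.
have m_k : m k = 0 by rewrite /m divff ?gt_eqF ?invariant_pi_gt0// occupation_k subee.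
have mj_eq0 : m j = 0.
  apply/eqP; rewrite eq_le m_ge0 andbT leNgt; apply/negP => mj_gt0.
  have mj_gt0' : 0 < m (j, l).1 by [].
  by have := invariant_gt0 (m := m) K_irr m_ge0 m_inv (k, l) mj_gt0'; rewrite m_k ltxx.
by rewrite piE mj_eq0 adde0.
Qed.

Lemma green_level_sum_pi (c : I -> \bar R) : (forall i, 0 <= c i) ->
  \esum_(x in [set: I * J]) green x * c x.1 =
  (\esum_(i in [set: I]) (pi i)%:E * c i) * ((pi k)^-1)%:E.
Proof.
move=> c_ge0; rewrite green_level_sum//; under eq_esum do rewrite occupation_eq.
rewrite -ge0_esumZr ?lee_fin ?invr_ge0//; last by move=> i; rewrite mule_ge0 ?lee_fin.
by apply: eq_esum => i _; rewrite EFinM muleAC.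
Qed.

End positive_recurrence.

End level_occupation.

Section kernel1_facts.
Context {R : realType}.
Variables (k0 : nat) (mu : int * int -> R) (mu'' : nat -> int * int -> R).
Local Notation law := (law1 k0 mu mu'').
Local Notation K := (kernel1 k0 mu mu'').
Hypothesis law_ge0 : forall i ab, 0 <= law i ab.
Hypothesis law_sum1 : forall i, (\esum_(ab in [set: int * int]) (law i ab)%:E = 1)%E.
Hypothesis law_eq0 : forall i (a b : int), a < - (i%:Z) -> law i (a, b) = 0.
Local Open Scope ereal_scope.

Lemma kernel1_ge0 z w : (0 <= K z w)%R.
Proof. exact: law_ge0. Qed.

(* [law1 i] vanishes when the first increment is below [-i], so [w - z] with [w] in
   [nat * int] ranges over the whole support. *)
Lemma kernel1_reindex (z : nat * int) (F : int * int -> \bar R) :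
  (forall ab, 0 <= F ab) ->
  \esum_(w in [set: nat * int]) (K z w)%:E * F (w.1%:Z - z.1%:Z, w.2 - z.2)%R =
  \esum_(ab in [set: int * int]) (law z.1 ab)%:E * F ab.
Proof.
move=> F_ge0.
rewrite [RHS](esumID [set ab : int * int | (- (z.1%:Z) <= ab.1)%R]); last first.
  by move=> ab _; rewrite mule_ge0 ?lee_fin.
rewrite [X in _ = _ + X]esum1 ?adde0; last first.
  by move=> [a b] [_ /= /negP]; rewrite -ltNge => /law_eq0 ->; rewrite mul0e.
rewrite setTI (reindex_esum [set: nat * int] _
  (fun w : nat * int => (w.1%:Z - z.1%:Z, w.2 - z.2)%R))//.
split=> [[i y] _ /= | [i y] [i' y'] _ _ /= [] ? ? | [a b] /= a_ge].
- by rewrite lerBrDl addrC addNr.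
- by congr pair; lia.
- by exists (`|(a + z.1%:Z)%R|%N, (b + z.2)%R) => //=; congr pair; lia.
Qed.

Lemma kernel1_sum1 z : \esum_(w in [set: nat * int]) (K z w)%:E = 1.
Proof.
have := kernel1_reindex z (fun _ => lee01); under eq_esum do rewrite mule1.
by under [X in _ = X -> _]eq_esum do rewrite mule1; rewrite law_sum1.
Qed.

Lemma kernel1_marg (z : nat * int) j :
  \esum_(b in [set: int]) (K z (j, b))%:E = kernelX1 k0 mu mu'' z.1 j.
Proof.
rewrite /kernelX1 (reindex_esum [set: int] [set: int] (fun b => (b + z.2)%R)).
  by apply: eq_esum => b _; rewrite /kernel1 /= addrK.
by split=> [// | x y _ _ /= | b _]; [lia | exists (b - z.2)%R => //=; lia].
Qed.

Lemma taboo_kernel1 k z0 n :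
  taboo k0 mu mu'' k z0 n = taboo_prob K [set x | x.1 = k] z0 n.
Proof. by elim: n => [// | n IH] /=; rewrite IH. Qed.

Lemma hit_set_sum k l (c : nat * int -> \bar R) : (forall x, 0 <= c x) ->
  \esum_(nx in hit_set k) taboo k0 mu mu'' k (k, l) nx.1 nx.2 * c nx.2 =
  \esum_(x in [set: nat * int]) return_law K [set x | x.1 = k] (k, l) x * c x.
Proof.
move=> c_ge0; have tab_ge0 n x : 0 <= taboo k0 mu mu'' k (k, l) n x.
  by rewrite taboo_kernel1; exact: (taboo_prob_ge0 _ _ kernel1_ge0).
rewrite esum_mkcond esum_pair; last by move=> z; case: ifP => // _; rewrite mule_ge0.
rewrite esum_swap; last by move=> n z; case: ifP => // _; rewrite mule_ge0.
apply: eq_esum => x _; rewrite /return_law -ge0_esumZr;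
  [|exact: c_ge0|by move=> n; exact: (return_at_ge0 _ _ kernel1_ge0)].
apply: eq_esum => n _; rewrite /return_at taboo_kernel1 in_level /=.
have -> : ((n, x) \in hit_set k) = (0 < n)%N && (x.1 == k).
  by apply/idP/andP => [/set_mem[-> ->]| [n_gt0 /eqP xk]]; last exact/mem_set.
by case: ifP => //; rewrite mul0e.
Qed.

End kernel1_facts.

Lemma max0_lipschitz {R : realType} (a b : R) :
  `|Num.max a 0 - Num.max b 0| <= `|a - b|.
Proof.
have := ler_norm (a - b); have := ler_norm (b - a); rewrite distrC ler_norml.
by case_minmax; lra.
Qed.

Lemma normr_max0 {R : realType} (a : R) : `|a| = Num.max a 0 + Num.max (- a) 0.
Proof.
have [a_ge0|a_lt0] := leP 0 a; [rewrite ger0_norm|rewrite ltr0_norm] => //; case_minmax; lra.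
Qed.

Section return_time_mean.
Context {R : realType}.
Variables (k0 : nat) (mu : int * int -> R) (mu'' : nat -> int * int -> R) (Cabs : R).
Local Notation law := (law1 k0 mu mu'').
Local Notation K := (kernel1 k0 mu mu'').
Hypothesis law_ge0 : forall i ab, 0 <= law i ab.
Hypothesis law_sum1 : forall i, (\esum_(ab in [set: int * int]) (law i ab)%:E = 1)%E.
Hypothesis law_eq0 : forall i (a b : int), a < - (i%:Z) -> law i (a, b) = 0.
Hypothesis law_abs_le : forall i,
  (\esum_(ab in [set: int * int]) (law i ab)%:E * (`|ab.2%:~R : R|)%:E <= Cabs%:E)%E.
Let K_ge0 := kernel1_ge0 law_ge0.
Let K_sum1 := kernel1_sum1 law_ge0 law_sum1 law_eq0.

Definition ycoord (x : nat * int) : R := x.2%:~R.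

Definition EY1_pos i :=
  (\esum_(ab in [set: int * int]) (Num.max (ab.2%:~R * law i ab) 0)%:E)%E.
Definition EY1_neg i :=
  (\esum_(ab in [set: int * int]) (Num.max (- (ab.2%:~R * law i ab)) 0)%:E)%E.

Lemma max_mul_law (b : R) i ab :
  Num.max (b * law i ab) 0%R = (law i ab * Num.max b 0)%R.
Proof. by rewrite maxr_pMr// mulr0 [law i ab * b]mulrC. Qed.

Local Open Scope ereal_scope.

Lemma EY1E i : EY1 k0 mu mu'' i = EY1_pos i - EY1_neg i.
Proof. by []. Qed.

Lemma EY1_pos_kernel y :
  EY1_pos y.1 = \esum_(w in [set: nat * int]) (K y w)%:E * (incr_pos ycoord y w)%:E.
Proof.
transitivity (\esum_(w in [set: nat * int])
                (K y w)%:E * (Num.max (w.2 - y.2)%:~R 0)%:E); last first.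
  by apply: eq_esum => w _; rewrite /incr_pos /ycoord intrB.
rewrite (kernel1_reindex law_ge0 law_eq0 y (F := fun ab => (Num.max (ab.2%:~R : R) 0)%:E)).
  by apply: eq_esum => ab _; rewrite -EFinM max_mul_law.
by move=> ab; rewrite lee_fin le_max lexx orbT.
Qed.

Lemma EY1_neg_kernel y :
  EY1_neg y.1 = \esum_(w in [set: nat * int]) (K y w)%:E * (incr_neg ycoord y w)%:E.
Proof.
transitivity (\esum_(w in [set: nat * int])
                (K y w)%:E * (Num.max (- (w.2 - y.2)%:~R) 0)%:E); last first.
  by apply: eq_esum => w _; rewrite /incr_neg /ycoord intrB opprB.
rewrite (kernel1_reindex law_ge0 law_eq0 y (F := fun ab => (Num.max (- ab.2%:~R : R) 0)%:E)).
  by apply: eq_esum => ab _; rewrite -EFinM -mulNr max_mul_law.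
by move=> ab; rewrite lee_fin le_max lexx orbT.
Qed.

Lemma EY1_pos_le i : EY1_pos i <= Cabs%:E.
Proof.
apply: le_trans (law_abs_le i); apply: le_esum => ab _.
by rewrite -EFinM lee_fin max_mul_law ler_wpM2l// ge_max normr_ge0 ler_norm.
Qed.

Lemma EY1_neg_le i : EY1_neg i <= Cabs%:E.
Proof.
apply: le_trans (law_abs_le i); apply: le_esum => ab _.
by rewrite -EFinM lee_fin -mulNr max_mul_law ler_wpM2l// ge_max normr_ge0 -normrN ler_norm.
Qed.

Lemma EabsY1_le i : EabsY1 k0 mu mu'' i <= Cabs%:E.
Proof.
apply: le_trans (law_abs_le i); rewrite le_eqVlt; apply/orP; left; apply/eqP.
by apply: eq_esum => ab _; rewrite -EFinM normrM (ger0_norm (law_ge0 i ab)) mulrC.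
Qed.

Lemma kernel1_abs_incr_le y :
  \esum_(w in [set: nat * int]) (K y w)%:E * (`|ycoord w - ycoord y|)%:E <= Cabs%:E.
Proof.
apply: le_trans (law_abs_le y.1); rewrite le_eqVlt; apply/orP; left; apply/eqP.
rewrite -(kernel1_reindex law_ge0 law_eq0 y (F := fun ab => (`|ab.2%:~R : R|)%:E))//.
by apply: eq_esum => w _; rewrite /ycoord intrB.
Qed.

Definition ycoord_pos x := Num.max (ycoord x) 0%R.
Definition ycoord_neg x := Num.max (- ycoord x)%R 0%R.

Lemma ycoord_pos_lipschitz y w :
  (`|ycoord_pos w - ycoord_pos y| <= `|ycoord w - ycoord y|)%R.
Proof. exact: max0_lipschitz. Qed.

Lemma ycoord_neg_lipschitz y w :
  (`|ycoord_neg w - ycoord_neg y| <= `|ycoord w - ycoord y|)%R.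
Proof. by apply: le_trans (max0_lipschitz _ _) _; rewrite -opprD normrN. Qed.

Lemma ycoord_pos_ge0 x : (0 <= ycoord_pos x)%R.
Proof. by rewrite le_max lexx orbT. Qed.

Lemma ycoord_neg_ge0 x : (0 <= ycoord_neg x)%R.
Proof. by rewrite le_max lexx orbT. Qed.

Lemma Cabs_ge0 : 0 <= Cabs%:E.
Proof.
apply: le_trans (law_abs_le 0%N); apply: esum_ge0 => ab _.
by rewrite mule_ge0 ?lee_fin.
Qed.

Lemma EY1_pos_bnd i : 0 <= EY1_pos i <= Cabs%:E.
Proof.
by rewrite EY1_pos_le andbT; apply: esum_ge0 => ab _; rewrite lee_fin le_max lexx orbT.
Qed.

Lemma EY1_neg_bnd i : 0 <= EY1_neg i <= Cabs%:E.
Proof.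
by rewrite EY1_neg_le andbT; apply: esum_ge0 => ab _; rewrite lee_fin le_max lexx orbT.
Qed.

Section positive_recurrence.
Variable pi : nat -> R.
Hypothesis pi_ge0 : forall i, (0 <= pi i)%R.
Hypothesis pi_sum1 : \esum_(i in [set: nat]) (pi i)%:E = 1.
Hypothesis pi_inv :
  forall j, (pi j)%:E = \esum_(i in [set: nat]) (pi i)%:E * kernelX1 k0 mu mu'' i j.
Hypothesis K_irr : irreducible K.

Lemma pi_average_le (F : nat -> \bar R) : (forall i, 0 <= F i <= Cabs%:E) ->
  \esum_(i in [set: nat]) (pi i)%:E * F i <= Cabs%:E.
Proof.
move=> F_bnd; apply: (@le_trans _ _ (\esum_(i in [set: nat]) (pi i)%:E * Cabs%:E)).
  by apply: le_esum => i _; rewrite lee_wpmul2l ?lee_fin//; have /andP[] := F_bnd i.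
have Cabs_ge0 : 0 <= Cabs%:E by have /andP[F0 FC] := F_bnd 0%N; exact: le_trans FC.
by rewrite ge0_esumZr ?pi_sum1 ?mul1e// => i; rewrite lee_fin.
Qed.

Lemma pi_average_fin (F : nat -> \bar R) : (forall i, 0 <= F i <= Cabs%:E) ->
  \esum_(i in [set: nat]) (pi i)%:E * F i \is a fin_num.
Proof.
move=> F_bnd; rewrite ge0_fin_numE; last first.
  by apply: esum_ge0 => i _; rewrite mule_ge0 ?lee_fin//; have /andP[] := F_bnd i.
exact: le_lt_trans (pi_average_le F_bnd) (ltry _).
Qed.

Lemma V1E : V1 k0 mu mu'' pi =
  (fine (\esum_(i in [set: nat]) (pi i)%:E * EY1_pos i)%E -
   fine (\esum_(i in [set: nat]) (pi i)%:E * EY1_neg i)%E)%R.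
Proof.
have bnd_fin (F : nat -> \bar R) i : 0 <= F i <= Cabs%:E -> F i \is a fin_num.
  move=> /andP[F0 FC]; rewrite ge0_fin_numE//; exact: le_lt_trans FC (ltry _).
have pi_fineE (F : nat -> \bar R) : (forall i, 0 <= F i <= Cabs%:E) ->
    \esum_(i in [set: nat]) (pi i * fine (F i))%:E = \esum_(i in [set: nat]) (pi i)%:E * F i.
  by move=> F_bnd; apply: eq_esum => i _; rewrite EFinM fineK// (bnd_fin _ _ (F_bnd i)).
have fine_ge0 (F : nat -> \bar R) i : 0 <= F i <= Cabs%:E -> (0 <= pi i * fine (F i))%R.
  by move=> /andP[F0 _]; rewrite mulr_ge0// fine_ge0.
rewrite /V1.
have -> : (fun i => pi i * fine (EY1 k0 mu mu'' i))%R =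
          (fun i => pi i * fine (EY1_pos i) - pi i * fine (EY1_neg i))%R.
  apply: funext => i; rewrite EY1E fineB ?mulrBr//.
  - exact: bnd_fin (EY1_pos_bnd i).
  - exact: bnd_fin (EY1_neg_bnd i).
have Epos := pi_fineE _ EY1_pos_bnd; have Eneg := pi_fineE _ EY1_neg_bnd.
have pos_fin := pi_average_fin EY1_pos_bnd; have neg_fin := pi_average_fin EY1_neg_bnd.
rewrite dsum_sub ?Epos ?Eneg ?fineB ?pos_fin ?neg_fin//.
all: move=> i; first [exact: fine_ge0 (EY1_pos_bnd i) | exact: fine_ge0 (EY1_neg_bnd i)].
Qed.

Variables (k : nat) (l : int).
Local Notation level := [set x : nat * int | x.1 = k].
Local Notation green := (green K level (k, l)).
Local Notation return_law := (return_law K level (k, l)).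
Local Notation drift_sum := (drift_sum K level (k, l)).

Lemma green_fin : \esum_(x in [set: nat * int]) green x \is a fin_num.
Proof.
exact: (green_mass_fin k l K_ge0 (@kernel1_marg _ k0 mu mu'')
          pi_ge0 pi_sum1 pi_inv K_irr).
Qed.

Lemma drift_sum_fin (t : nat * int -> nat * int -> R) :
  (forall y w, 0 <= t y w <= `|ycoord w - ycoord y|)%R -> drift_sum t \is a fin_num.
Proof.
move=> t_bnd; have t_ge0 y w : (0 <= t y w)%R by have /andP[] := t_bnd y w.
rewrite ge0_fin_numE; last exact: (drift_sum_ge0 _ _ K_ge0 t_ge0).
apply: (@le_lt_trans _ _ ((\esum_(x in [set: nat * int]) green x) * Cabs%:E)).
  rewrite (drift_sumE _ _ K_ge0 t_ge0).
  rewrite -ge0_esumZr; [|exact: Cabs_ge0|by move=> x; exact: (green_ge0 _ _ K_ge0)].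
  apply: le_esum => y _; apply: lee_wpmul2l; first exact: (green_ge0 _ _ K_ge0).
  apply: le_trans (kernel1_abs_incr_le y); apply: le_esum => w _.
  by rewrite lee_wpmul2l ?lee_fin ?K_ge0//; have /andP[] := t_bnd y w.
by rewrite ltey_eq fin_numM ?green_fin.
Qed.

Lemma drift_sum_average (t : nat * int -> nat * int -> R) (F : nat -> \bar R) :
  (forall y w, 0 <= t y w)%R -> (forall i, 0 <= F i <= Cabs%:E) ->
  (forall y, F y.1 = \esum_(w in [set: nat * int]) (K y w)%:E * (t y w)%:E) ->
  drift_sum t = (fine (\esum_(i in [set: nat]) (pi i)%:E * F i)%E / pi k)%:E.
Proof.
move=> t_ge0 F_bnd FE; have F_ge0 i : 0 <= F i by have /andP[] := F_bnd i.
rewrite (drift_sumE _ _ K_ge0 t_ge0).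
under eq_esum do rewrite -FE.
rewrite (green_level_sum_pi k l K_ge0 (@kernel1_marg _ k0 mu mu'') pi_ge0
  pi_sum1 pi_inv K_irr K_sum1 F_ge0).
by rewrite -(fineK (pi_average_fin F_bnd)) -EFinM.
Qed.

Lemma drift_sum_incr_fin (h : nat * int -> R) :
  (forall y w, `|h w - h y| <= `|ycoord w - ycoord y|)%R ->
  drift_sum (incr_pos h) \is a fin_num /\ drift_sum (incr_neg h) \is a fin_num.
Proof.
move=> h_lip; split; apply: drift_sum_fin => y w.
  by rewrite incr_pos_ge0 (le_trans (incr_pos_le_abs h y w)).
by rewrite incr_neg_ge0 (le_trans (incr_neg_le_abs h y w)).
Qed.

Lemma return_law_lipschitz (h : nat * int -> R) : (forall x, 0 <= h x)%R ->
  (forall y w, `|h w - h y| <= `|ycoord w - ycoord y|)%R ->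
  \esum_(x in [set: nat * int]) return_law x * (h x)%:E =
  (h (k, l) + fine (drift_sum (incr_pos h)) - fine (drift_sum (incr_neg h)))%:E.
Proof.
move=> h_ge0 /drift_sum_incr_fin[pos_fin neg_fin].
rewrite -[LHS](@addeK _ _ _ neg_fin).
rewrite -(dynkin_formula K_ge0 K_sum1 green_fin h_ge0).
by rewrite -(fineK pos_fin) -(fineK neg_fin) -!EFinD.
Qed.

Lemma drift_sum_ycoord_balance :
  drift_sum (incr_pos ycoord_pos) + drift_sum (incr_neg ycoord_neg) +
    drift_sum (incr_neg ycoord) =
  drift_sum (incr_neg ycoord_pos) + drift_sum (incr_pos ycoord_neg) +
    drift_sum (incr_pos ycoord).
Proof.
have ge0D (t1 t2 : nat * int -> nat * int -> R) :
    (forall y w, 0 <= t1 y w)%R -> (forall y w, 0 <= t2 y w)%R ->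
    forall y w, (0 <= t1 y w + t2 y w)%R.
  by move=> t1_ge0 t2_ge0 y w; rewrite addr_ge0.
have pn_ge0 := ge0D _ _ (incr_pos_ge0 ycoord_pos) (incr_neg_ge0 ycoord_neg).
have np_ge0 := ge0D _ _ (incr_neg_ge0 ycoord_pos) (incr_pos_ge0 ycoord_neg).
rewrite -(drift_sumD _ _ K_ge0 (incr_pos_ge0 ycoord_pos) (incr_neg_ge0 ycoord_neg)).
rewrite -(drift_sumD _ _ K_ge0 (incr_neg_ge0 ycoord_pos) (incr_pos_ge0 ycoord_neg)).
rewrite -(drift_sumD _ _ K_ge0 pn_ge0 (incr_neg_ge0 ycoord)).
rewrite -(drift_sumD _ _ K_ge0 np_ge0 (incr_pos_ge0 ycoord)).
congr drift_sum; apply/funext => y; apply/funext => w; apply: incr_balance => x.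
by rewrite /ycoord_pos /ycoord_neg; case_minmax; lra.
Qed.

Lemma return_ycoord_mean :
  \esum_(x in [set: nat * int]) return_law x * (ycoord_pos x)%:E -
  \esum_(x in [set: nat * int]) return_law x * (ycoord_neg x)%:E =
  (l%:~R + V1 k0 mu mu'' pi / pi k)%:E.
Proof.
rewrite (return_law_lipschitz ycoord_pos_ge0 ycoord_pos_lipschitz).
rewrite (return_law_lipschitz ycoord_neg_ge0 ycoord_neg_lipschitz) -EFinB; congr EFin.
have [pp_fin pn_fin] := drift_sum_incr_fin ycoord_pos_lipschitz.
have [np_fin nn_fin] := drift_sum_incr_fin ycoord_neg_lipschitz.
move: drift_sum_ycoord_balance.
rewrite (drift_sum_average (incr_neg_ge0 _) EY1_neg_bnd EY1_neg_kernel).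
rewrite (drift_sum_average (incr_pos_ge0 _) EY1_pos_bnd EY1_pos_kernel).
rewrite -(fineK pp_fin) -(fineK pn_fin) -(fineK np_fin) -(fineK nn_fin) -!EFinD => -[bal].
have yE : (ycoord_pos (k, l) - ycoord_neg (k, l) = l%:~R)%R.
  by rewrite /ycoord_pos /ycoord_neg /ycoord; case_minmax; lra.
by rewrite V1E; lra.
Qed.

Lemma P_T1_finite_eq1 : P_T1_finite k0 mu mu'' k l = 1.
Proof.
have := hit_set_sum law_ge0 k l (fun=> lee01).
under eq_esum do rewrite mule1; under [X in _ = X -> _]eq_esum do rewrite mule1.
move=> hitE; rewrite /P_T1_finite hitE.
exact: (return_law_mass1 k l K_ge0 (@kernel1_marg _ k0 mu mu'') pi_ge0 pi_sum1 pi_inv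
  K_irr K_sum1).
Qed.

Lemma EabsY_T1_fin : EabsY_T1 k0 mu mu'' k l < +oo.
Proof.
have abs_ge0 x : 0 <= (`|ycoord x|)%:E by rewrite lee_fin.
rewrite /EabsY_T1 (hit_set_sum law_ge0 k l abs_ge0).
have posE x : 0 <= (ycoord_pos x)%:E by rewrite lee_fin ycoord_pos_ge0.
have negE x : 0 <= (ycoord_neg x)%:E by rewrite lee_fin ycoord_neg_ge0.
rewrite (eq_esum (b := fun x => return_law x * (ycoord_pos x)%:E +
                               return_law x * (ycoord_neg x)%:E)); last first.
  by move=> x _; rewrite -ge0_muleDr// -EFinD normr_max0.
rewrite esumD => [|x _|x _]; last 2 first.
- by rewrite mule_ge0 ?posE// (return_law_ge0 _ _ K_ge0).
- by rewrite mule_ge0 ?negE// (return_law_ge0 _ _ K_ge0).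
rewrite (return_law_lipschitz ycoord_pos_ge0 ycoord_pos_lipschitz).
by rewrite (return_law_lipschitz ycoord_neg_ge0 ycoord_neg_lipschitz) -EFinD ltry.
Qed.

Lemma EY_T1E : EY_T1 k0 mu mu'' k l = (l%:~R + V1 k0 mu mu'' pi / pi k)%:E.
Proof.
have posE x : 0 <= (ycoord_pos x)%:E by rewrite lee_fin ycoord_pos_ge0.
have negE x : 0 <= (ycoord_neg x)%:E by rewrite lee_fin ycoord_neg_ge0.
rewrite /EY_T1 (hit_set_sum law_ge0 k l posE) (hit_set_sum law_ge0 k l negE).
exact: return_ycoord_mean.
Qed.

End positive_recurrence.

End return_time_mean.

Section exponential_moment.
Context {R : realType}.

Lemma abs_le_expR (d g c a b : R) : 0 < d -> 0 < g -> 0 <= c -> - c <= a -> - c <= b ->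
  `|b| <= c + expR (d * c) / g * expR (d * a + g * b).
Proof.
move=> d_gt0 g_gt0 c_ge0 ca cb.
have E_ge0 : 0 <= expR (d * c) / g * expR (d * a + g * b).
  by rewrite mulr_ge0 ?divr_ge0 ?expR_ge0// ltW.
have [bc|cb'] := leP b c.
  have : `|b| <= c by rewrite ler_norml; apply/andP; split; lra.
  lra.
rewrite ger0_norm; last lra.
suff : b <= expR (d * c) / g * expR (d * a + g * b) by lra.
rewrite mulrAC ler_pdivlMr// mulrC -expRD.
apply: (@le_trans _ _ (expR (g * b))); first by have := expR_ge1Dx (g * b); lra.
rewrite ler_expR; have : 0 <= d * (c + a) by rewrite mulr_ge0 ?(ltW d_gt0)//; lra.
rewrite mulrDr; lra.
Qed.

Lemma abs_moment_le (q : int * int -> R) (d g c C : R) :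
  0 < d -> 0 < g -> 0 <= c -> (forall ab, 0 <= q ab) ->
  (\esum_(ab in [set: int * int]) (q ab)%:E = 1)%E ->
  (forall a b, q (a, b) != 0 -> - c <= a%:~R /\ - c <= b%:~R) ->
  (\esum_(ab in [set: int * int])
     (q ab * expR (d * ab.1%:~R + g * ab.2%:~R))%:E <= C%:E)%E ->
  (\esum_(ab in [set: int * int]) (q ab)%:E * (`|ab.2%:~R|)%:E <=
     (c + expR (d * c) / g * C)%:E)%E.
Proof.
move=> d_gt0 g_gt0 c_ge0 q_ge0 q_sum1 q_supp q_exp.
pose e := expR (d * c) / g.
have e_ge0 : 0 <= e by rewrite divr_ge0 ?expR_ge0// ltW.
have qc_ge0 ab : (0 <= c%:E * (q ab)%:E)%E by rewrite mule_ge0 ?lee_fin.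
have qe_ge0 ab : (0 <= e%:E * (q ab * expR (d * ab.1%:~R + g * ab.2%:~R))%:E)%E.
  by rewrite -EFinM lee_fin; apply: mulr_ge0 => //; apply: mulr_ge0.
apply: (@le_trans _ _ (\esum_(ab in [set: int * int])
    (c%:E * (q ab)%:E + e%:E * (q ab * expR (d * ab.1%:~R + g * ab.2%:~R))%:E))%E).
  apply: le_esum => -[a b] _; rewrite -!EFinM -EFinD lee_fin /=.
  have [->|q_neq0] := eqVneq (q (a, b)) 0; first by rewrite !(mul0r, mulr0) addr0.
  have [ca cb] := q_supp a b q_neq0.
  set E := expR _; have -> : c * q (a, b) + e * (q (a, b) * E) = q (a, b) * (c + e * E).
    by ring.
  by rewrite ler_wpM2l//; exact: abs_le_expR.
rewrite (esumD (fun ab _ => qc_ge0 ab) (fun ab _ => qe_ge0 ab)).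
rewrite !ge0_esumZl_EFin// => [|ab]; last by rewrite lee_fin mulr_ge0 ?expR_ge0.
by rewrite q_sum1 mule1 EFinD leeD2l// (EFinM e C); apply: lee_wpmul2l; rewrite ?lee_fin.
Qed.

End exponential_moment.

Section model.
Context {R : realType}.
Variables (k0 : nat) (mu : int * int -> R) (mu'' : nat -> int * int -> R).
Hypothesis mu_distr : is_distr mu.
Hypothesis mu''_distr : forall i, (i < k0)%N -> is_distr (mu'' i).
Hypothesis mu_eq0 : forall a b : int, (a < - k0%:Z \/ b < - k0%:Z) -> mu (a, b) = 0.
Hypothesis mu''_eq0 : forall i : nat, (i < k0)%N ->
  forall a b : int, (b < - k0%:Z \/ a < - i%:Z) -> mu'' i (a, b) = 0.
Local Notation law := (law1 k0 mu mu'').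

Lemma law1_distr i : is_distr (law i).
Proof. by rewrite /law1; case: leqP => // /mu''_distr. Qed.

Lemma law1_eq0 i (a b : int) : a < - i%:Z -> law i (a, b) = 0.
Proof.
rewrite /law1; case: leqP => [k0i ai | /mu''_eq0 mu''_i ai]; last by apply: mu''_i; right.
by apply: mu_eq0; left; apply: lt_le_trans ai _; rewrite lerN2 lez_nat.
Qed.

Lemma law1_support i (a b : int) : law i (a, b) != 0 -> - k0%:Z <= a /\ - k0%:Z <= b.
Proof.
rewrite /law1; case: leqP => [_ | ik0] /eqP law_neq0; rewrite !leNgt.
  by split; apply/negP => ab_lt; apply: law_neq0; apply: mu_eq0; [left | right].
split; apply/negP => ab_lt; apply: law_neq0; apply: (mu''_eq0 ik0); [right | left] => //.
by apply: lt_le_trans ab_lt _; rewrite lerN2 lez_nat ltnW.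
Qed.

Lemma law1_abs_moment_le (d g C : R) i : 0 < d -> 0 < g ->
  (\esum_(ab in [set: int * int])
     (law i ab * expR (d * ab.1%:~R + g * ab.2%:~R))%:E <= C%:E)%E ->
  (\esum_(ab in [set: int * int]) (law i ab)%:E * (`|ab.2%:~R : R|)%:E <=
     (k0%:R + expR (d * k0%:R) / g * C)%:E)%E.
Proof.
move=> d_gt0 g_gt0; have [law_ge0 law_sum1] := law1_distr i.
apply: (abs_moment_le d_gt0 g_gt0 (ler0n _ k0) law_ge0 law_sum1) => a b /law1_support[ka kb].
by rewrite -[k0%:R]/(k0%:Z%:~R : R) -mulrNz !ler_int.
Qed.

End model.

Lemma lawZ_k0 {R : realType} k0 (mu : int * int -> R) mu' mu'' muij i :
  lawZ k0 mu mu' mu'' muij i k0 = law1 k0 mu mu'' i.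
Proof. by rewrite /lawZ /law1 leqnn; case: ifP. Qed.

Theorem lemmaA1 (R : realType) (k0 : nat)
  (mu : int * int -> R) (mu' : nat -> int * int -> R)
  (mu'' : nat -> int * int -> R) (muij : nat -> nat -> int * int -> R)
  (pi1 : nat -> R) :
  (0 < k0)%N ->
  (* probability measures *)
  is_distr mu ->
  (forall j, (j < k0)%N -> is_distr (mu' j)) ->
  (forall i, (i < k0)%N -> is_distr (mu'' i)) ->
  (forall i j, (i < k0)%N -> (j < k0)%N -> is_distr (muij i j)) ->
  (* (A1) *)
  (forall a b : int, (a < - k0%:Z \/ b < - k0%:Z) -> mu (a, b) = 0) ->
  (forall j : nat, (j < k0)%N -> forall a b : int,
      (a < - k0%:Z \/ b < - j%:Z) -> mu' j (a, b) = 0) ->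
  (forall i : nat, (i < k0)%N -> forall a b : int,
      (b < - k0%:Z \/ a < - i%:Z) -> mu'' i (a, b) = 0) ->
  (forall i j : nat, (i < k0)%N -> (j < k0)%N -> forall a b : int,
      (a < - i%:Z \/ b < - j%:Z) -> muij i j (a, b) = 0) ->
  (* (A2) *)
  (exists delta gamma C : R, 0 < delta /\ 0 < gamma /\ 0 < C /\
     forall i j : nat,
       (\esum_(ab in [set: int * int])
          (lawZ k0 mu mu' mu'' muij i j ab *
             expR (delta * ab.1%:~R + gamma * ab.2%:~R))%:E <= C%:E)%E) ->
  (* (A3) *)
  irreducible (kernel0 mu) ->
  irreducible (kernel1 k0 mu mu'') ->
  irreducible (kernel2 k0 mu mu') ->
  irreducible (kernelZ k0 mu mu' mu'' muij) ->
  (* m_1 < 0 *)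
  (m1 mu < 0)%E ->
  (* pi_1 is the invariant distribution of X_1 *)
  invariant_X1 k0 mu mu'' pi1 ->
  (* V_1 is well defined *)
  ((forall i : nat, (EabsY1 k0 mu mu'' i < +oo)%E) /\
   (\esum_(i in [set: nat]) (pi1 i)%:E * EabsY1 k0 mu mu'' i < +oo)%E) /\
  (* for every (k, l), Y_1(T_1(k)) is integrable with the given mean *)
  (forall (k : nat) (l : int),
     P_T1_finite k0 mu mu'' k l = 1%E /\
     (EabsY_T1 k0 mu mu'' k l < +oo)%E /\
     EY_T1 k0 mu mu'' k l = (l%:~R + V1 k0 mu mu'' pi1 / pi1 k)%:E).
Proof.
move=> _ mu_distr _ mu''_distr _ mu_eq0 _ mu''_eq0 _
  [d [g [C [d_gt0 [g_gt0 [_ exp_moment]]]]]] _ K_irr _ _ _ [[pi_ge0 pi_sum1] pi_inv].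
have law_ge0 i := (law1_distr mu_distr mu''_distr i).1.
have law_sum1 i := (law1_distr mu_distr mu''_distr i).2.
have law_eq0 := law1_eq0 mu_eq0 mu''_eq0.
have law_exp_moment i : (\esum_(ab in [set: int * int])
    (law1 k0 mu mu'' i ab * expR (d * ab.1%:~R + g * ab.2%:~R))%:E <= C%:E)%E.
  by rewrite -(lawZ_k0 k0 mu mu' mu'' muij); exact: exp_moment.
have law_abs_le i := law1_abs_moment_le mu_distr mu''_distr mu_eq0 mu''_eq0 d_gt0 g_gt0
  (law_exp_moment i).
have EabsY1_bnd i : (0 <= EabsY1 k0 mu mu'' i <= (k0%:R + expR (d * k0%:R) / g * C)%:E)%E.
  by rewrite EabsY1_le// andbT; apply: esum_ge0 => ab _; rewrite lee_fin.
split.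
  split=> [i | ]; first by have /andP[_ /le_lt_trans ->] := EabsY1_bnd i; rewrite ?ltry.
  exact: le_lt_trans (pi_average_le pi_ge0 pi_sum1 EabsY1_bnd) (ltry _).
move=> k l; split; first exact: P_T1_finite_eq1.
split; first exact: (EabsY_T1_fin law_ge0 law_sum1 law_eq0 law_abs_le).
exact: (EY_T1E law_ge0 law_sum1 law_eq0 law_abs_le).
Qed.
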